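(* Let $N$ be a finite set with $n=|N|\ge 2$. For a vector $o\in\mathbb{R}^{\Upsilon}$ (extended by $o(b|\emptyset)=0$ for all $b\in N$) the following three conditions are equivalent: (0) $o$ is an SE objective; (a) for every $Z\subseteq N$ and distinct $a,b\in N\setminus Z$, $o(b|\{a\}\cup Z)+o(a|Z)=o(a|\{b\}\cup Z)+o(b|Z)$; (b) there exists $m\in\mathbb{R}^{\mathcal{S}}$ (extended by $m(S)=0$ for $|S|\le1$) such that $o(a|B)=m(\{a\}\cup B)-m(B)$ for all $a\in N$ and $B\subseteq N\setminus\{a\}$. In particular, the linear subspace of SE objectives has dimension $2^n-n-1$.
   Context: $\mathrm{DAG}(N)$ is the set of acyclic directed graphs over $N$; $\mathrm{pa}_G(a)$ is the parent set of $a$ in $G$; $G\sim H$ (Markov equivalence) means $G,H$ have the same adjacencies and the same immoralities (induced subgraphs $a\to c\leftarrow b$ with $a,b$ non-adjacent). $\Upsilon=\{(a|B): a\in N,\ \emptyset\neq B\subseteq N\setminus\{a\}\}$; $\eta_G\in\mathbb{R}^{\Upsilon}$ has $\eta_G(a|B)=1$ if $B=\mathrm{pa}_G(a)$, else $0$. $o\in\mathbb{R}^{\Upsilon}$ is an SE objective if $\langle o,\eta_G\rangle=\langle o,\eta_H\rangle$ for all $G,H\in\mathrm{DAG}(N)$ with $G\sim H$. $\mathcal{S}=\{S\subseteq N:|S|\ge 2\}$. *)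

From mathcomp Require Import all_boot all_order all_algebra.
Set Implicit Arguments. Unset Strict Implicit. Unset Printing Implicit Defensive.
Import Order.TTheory GRing.Theory Num.Theory.
Local Open Scope ring_scope.

Section Defs.
Variable T : finType.

Definition Upsilon : predArgType :=
  {p : T * {set T} | (p.1 \notin p.2) && (p.2 != set0)}.

(* A directed graph over N, given by its parent sets. *)
Definition digraph := T -> {set T}.

Definition edge (G : digraph) : rel T := fun u v => u \in G v.

Definition is_DAG (G : digraph) : Prop :=
  forall u v, edge G u v -> ~~ connect (edge G) v u.

Definition adjacent (G : digraph) (x y : T) : bool :=
  (x \in G y) || (y \in G x).

Definition immorality (G : digraph) (a b c : T) : bool :=
  [&& a \in G c, b \in G c, a != b & ~~ adjacent G a b].

Definition markov_equiv (G H : digraph) : Prop :=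
  (forall x y, adjacent G x y = adjacent H x y) /\
  (forall a b c, immorality G a b c = immorality H a b c).

Variable R : realFieldType.

Definition objective := {ffun Upsilon -> R^o}.

Definition eta (G : digraph) : objective :=
  [ffun u : Upsilon => if (val u).2 == G (val u).1 then 1 else 0].

Definition inner (o v : objective) : R := \sum_(u : Upsilon) o u * v u.

Definition SE_objective (o : objective) : Prop :=
  forall G H, is_DAG G -> is_DAG H -> markov_equiv G H ->
    inner o (eta G) = inner o (eta H).

(* o(a|B), extended by o(a|emptyset) = 0 (value 0 also when a \in B, unused) *)
Definition oext (o : objective) (a : T) (B : {set T}) : R :=
  if @insub _ (fun p : T * {set T} => (p.1 \notin p.2) && (p.2 != set0))
       Upsilon (a, B) is Some u then o u else 0.

Definition cond_a (o : objective) : Prop :=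
  forall (Z : {set T}) (a b : T), a \notin Z -> b \notin Z -> a != b ->
    oext o b (a |: Z) + oext o a Z = oext o a (b |: Z) + oext o b Z.

Definition cond_b (o : objective) : Prop :=
  exists m : {set T} -> R,
    (forall S : {set T}, (#|S| <= 1)%N -> m S = 0) /\
    (forall (a : T) (B : {set T}), a \notin B -> oext o a B = m (a |: B) - m B).

End Defs.

From HB Require Import structures.
From mathcomp Require Import all_boot all_order all_algebra.
From mathcomp Require Import ring zify.
Import GRing.Theory.
Set Implicit Arguments. Unset Strict Implicit. Unset Printing Implicit Defensive.
Local Open Scope ring_scope.

(** The score [inner o (eta G)] of a DAG is the sum of the local scores
    [oext o a (G a)].  (0) -> (a): the DAGs with parents [Z] for [a], [a |: Z]
    for [b], and the same with [a] and [b] swapped, are Markov equivalent (the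
    arc between [a] and [b] is covered), and their scores are the two sides of
    (a).  (a) -> (b): take for [m S] the score of the complete DAG on [S] along
    a fixed enumeration of [N]; (a) moves the top element of [a |: B] past [a].
    (b) -> (0): Moebius inversion of [m] writes the score of [G] as
    [\sum_S moebius m S * #|clique_sinks G S|], and in a DAG at most one [x] in
    [S] has all of [S :\ x] as parents, while the existence of such an [x]
    depends only on adjacencies and immoralities.  Finally
    [m |-> (a, B) |-> m (a |: B) - m B], on functions of the sets of size at
    least 2, is injective with image the SE objectives, which gives the
    dimension [2 ^ n - n - 1]. *)

Section Scores.
Variables (T : finType) (R : realFieldType).
Implicit Types (o : objective T R) (G : digraph T) (a : T) (B : {set T}).

Lemma oext_set0 o a : oext o a set0 = 0.
Proof. by rewrite /oext insubF //= eqxx andbF. Qed.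

Lemma DAG_irrefl G a : is_DAG G -> a \notin G a.
Proof. by move=> dagG; apply/negP => aGa; have := dagG a a aGa; rewrite connect0. Qed.

Lemma inner_etaE o G : (forall a, a \notin G a) ->
  inner o (eta R G) = \sum_a oext o a (G a).
Proof.
move=> irrG; rewrite /inner (partition_big (fun u : Upsilon T => (val u).1) predT) //=.
apply: eq_bigr => a _; rewrite /oext; case: insubP => [u0 _ u0E|].
  rewrite (bigD1 u0) /=; last by rewrite u0E.
  rewrite ffunE u0E eqxx mulr1 big1 ?addr0 // => u /andP[/eqP ua ne].
  rewrite ffunE ua; case: eqP => [BE|]; last by rewrite mulr0.
  by case/eqP: ne; apply: val_inj; rewrite u0E -BE -ua -surjective_pairing.
rewrite /= irrG negbK => /eqP G0.
apply: big1 => u /eqP ua; have /andP[_ B0] := valP u.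
by rewrite ffunE ua G0 (negbTE B0) mulr0.
Qed.

Lemma ranked_DAG G (r : T -> nat) :
  (forall u v, u \in G v -> (r u < r v)%N) -> is_DAG G.
Proof.
move=> rG u v /rG ltuv; apply/negP => /connectP [p pG lst].
suff: (r v <= r (last v p))%N by rewrite -lst leqNgt ltuv.
elim: p v pG {lst ltuv} => //= w p IH v /andP[vw pG].
exact: leq_trans (ltnW (rG _ _ vw)) (IH _ pG).
Qed.

End Scores.

Section CoveredArc.
Variables (T : finType) (a b : T) (Z : {set T}).
Hypotheses (aZ : a \notin Z) (bZ : b \notin Z) (ab : a != b).

Definition covered_arc : digraph T :=
  fun x => if x == a then Z else if x == b then a |: Z else set0.

Lemma covered_arcE u v :
  (u \in covered_arc v) = (v \in [set a; b]) && (u \in Z) || (v == b) && (u == a).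
Proof.
rewrite /covered_arc !inE; have [->|va] := eqVneq v a.
  by rewrite /= (negbTE ab) orbF.
by case: (v == b); rewrite ?inE // orbC.
Qed.

Lemma arc_ends_notin w : w \in Z -> (w == a) = false /\ (w == b) = false.
Proof. by move=> wZ; split; [apply: contraNF aZ | apply: contraNF bZ] => /eqP <-. Qed.

Lemma covered_arc_DAG : is_DAG covered_arc.
Proof.
apply: (@ranked_DAG _ _ (fun x => (x == a) + (x == b).*2)%N) => u v.
rewrite covered_arcE !inE.
case/orP=> [/andP[/orP[]/eqP-> /arc_ends_notin[-> ->]]|/andP[/eqP-> /eqP->]].
all: by rewrite !eqxx ?[b == a]eq_sym (negbTE ab).
Qed.

Lemma adjacent_covered_arc x y : adjacent covered_arc x y =
  [|| (y \in [set a; b]) && (x \in Z), (x \in [set a; b]) && (y \in Z),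
      (x == a) && (y == b) | (x == b) && (y == a)].
Proof.
rewrite /adjacent !covered_arcE -!orbA; congr (_ || _).
by rewrite orbCA [(y == b) && _]andbC.
Qed.

Lemma immorality_covered_arc x y c : immorality covered_arc x y c =
  [&& c \in [set a; b], x \in Z, y \in Z & x != y].
Proof.
rewrite /immorality adjacent_covered_arc !covered_arcE !inE.
have [xZ|xZ] := boolP (x \in Z); have [yZ|yZ] := boolP (y \in Z).
- have [-> ->] := arc_ends_notin xZ; have [-> ->] := arc_ends_notin yZ.
  by case: (c == a); case: (c == b); case: (x != y).
- by case: (eqVneq y a) => [->|_]; rewrite /= ?andbF.
- by case: (eqVneq x a) => [->|_]; rewrite /= ?andbF ?orbT.
- by case: (eqVneq x a) => [->|_]; case: (eqVneq y a) => [->|_];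
    rewrite /= ?andbF ?eqxx.
Qed.

End CoveredArc.

Lemma covered_arc_reversal (T : finType) (a b : T) (Z : {set T}) :
  a \notin Z -> b \notin Z -> a != b ->
  markov_equiv (covered_arc a b Z) (covered_arc b a Z).
Proof.
move=> aZ bZ ab; have ba : b != a by rewrite eq_sym.
split=> [x y|x y c]; last by rewrite !immorality_covered_arc // setUC.
rewrite !adjacent_covered_arc // [[set b; a]]setUC.
by rewrite [[|| (x == b) && _ | _]]orbC.
Qed.

Lemma SE_cond_a (T : finType) (R : realFieldType) (o : objective T R) :
  SE_objective o -> cond_a o.
Proof.
move=> SEo Z a b aZ bZ ab; have ba : b != a by rewrite eq_sym.
have score_arc x y : x \notin Z -> y \notin Z -> x != y ->
    inner o (eta R (covered_arc x y Z)) = oext o x Z + oext o y (x |: Z).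
  move=> xZ yZ xy; rewrite inner_etaE => [|w]; last exact/DAG_irrefl/covered_arc_DAG.
  rewrite (bigD1 x) // (bigD1 y) 1?eq_sym //= /covered_arc eqxx eq_sym (negbTE xy) eqxx.
  rewrite big1 ?addr0 ?addrA // => w /andP[wy wx].
  by rewrite (negbTE wx) (negbTE wy) oext_set0.
have := SEo _ _ (covered_arc_DAG aZ bZ ab) (covered_arc_DAG bZ aZ ba)
  (covered_arc_reversal aZ bZ ab).
by rewrite !score_arc // addrC => ->; rewrite addrC.
Qed.

Section CompleteScore.
Variables (T : finType) (R : realFieldType) (o : objective T R).
Implicit Types (a x : T) (B S : {set T}).

Local Notation rank x := (enum_rank x : nat).

Definition complete_score S : R :=
  \sum_(x in S) oext o x [set y in S | rank y < rank x]%N.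

Lemma complete_score_set0 : complete_score set0 = 0.
Proof. by rewrite /complete_score big_set0. Qed.

Lemma complete_score_top S x : x \in S -> {in S, forall y, rank y <= rank x}%N ->
  complete_score S = complete_score (S :\ x) + oext o x (S :\ x).
Proof.
move=> xS xtop; have below y : y \in S -> y != x -> (rank y < rank x)%N.
  move=> yS yx; rewrite ltn_neqAle xtop // andbT.
  by apply: contra yx => /eqP/val_inj/enum_rank_inj ->.
rewrite /complete_score (bigD1 x) //= addrC; congr (_ + oext o x _); last first.
  apply/setP => y; rewrite !inE.
  have [->|yx] /= := eqVneq y x; first by rewrite ltnn andbF.
  by apply/andb_idr => yS; apply: below.
apply: eq_big => [y|y /andP[yS yx]]; first by rewrite !inE andbC.
congr (oext o y _); apply/setP => z; rewrite !inE.
have [->|//] := eqVneq z x; rewrite xS /= ltnNge ltnW // below //.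
Qed.

Lemma complete_score_set1 x : complete_score [set x] = 0.
Proof.
rewrite (@complete_score_top _ x) ?set11 // => [|y /set1P -> //].
by rewrite setDv complete_score_set0 oext_set0 addr0.
Qed.

(* Peel off the top-ranked element [x] of [a |: B]: if [x = a] this is
   [complete_score_top], otherwise condition (a) at [Z = B :\ x] exchanges
   [a] and [x] and the induction hypothesis applies to [B :\ x]. *)
Lemma cond_a_complete_score : cond_a o ->
  forall a B, a \notin B -> oext o a B = complete_score (a |: B) - complete_score B.
Proof.
move=> cond_o a B; have [k] := ubnP #|B|; elim: k a B => // k IH a B.
rewrite ltnS => Bk aB; have [->|[b bB]] := set_0Vmem B.
  by rewrite oext_set0 setU0 complete_score_set1 complete_score_set0 subrr.
have [x xaB xtop] := arg_maxnP (fun y => rank y) (setU1r a bB).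
have [xa|xa] := eqVneq x a.
  by rewrite (complete_score_top xaB xtop) xa setU1K // addrAC subrr add0r.
have xB : x \in B by case/setU1P: xaB => // /eqP; rewrite (negbTE xa).
have xB' : x \notin B :\ x by rewrite setD11.
have aB' : a \notin B :\ x by rewrite inE negb_and aB orbT.
have B'k : (#|B :\ x| < k)%N by rewrite (cardsD1 x B) xB in Bk.
rewrite (complete_score_top xaB xtop) (complete_score_top xB); last first.
  by move=> y yB; apply/xtop/setU1r.
have -> : (a |: B) :\ x = a |: (B :\ x).
  by apply/setP => y; rewrite !inE; case: eqVneq => // ->; rewrite (negbTE xa).
have ax : a != x by rewrite eq_sym.
have := cond_o _ _ _ aB' xB' ax; rewrite setD1K // (IH a) // => cond_axB.
by rewrite -[oext o a B](addrK (oext o x (B :\ x))) -cond_axB; ring.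
Qed.

Lemma cond_a_b : cond_a o -> cond_b o.
Proof.
move=> cond_o; exists complete_score; split; last exact: cond_a_complete_score.
move=> S; rewrite leq_eqVlt ltnS leqn0 cards_eq0 => /orP[/cards1P[x ->]|/eqP->].
- exact: complete_score_set1.
- exact: complete_score_set0.
Qed.

End CompleteScore.

Lemma cond_b_a (T : finType) (R : realFieldType) (o : objective T R) :
  cond_b o -> cond_a o.
Proof.
case=> m [_ incr_m] Z a b aZ bZ ab.
have baZ : b \notin a |: Z by rewrite !inE negb_or eq_sym ab.
have abZ : a \notin b |: Z by rewrite !inE negb_or ab.
by rewrite !incr_m // setUCA addrA subrK [RHS]addrA subrK.
Qed.

Section CliqueSinks.
Variable T : finType.
Implicit Types (G H : digraph T) (S : {set T}).

Definition clique_sinks G S : {set T} := [set x in S | S :\ x \subset G x].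

Lemma card_clique_sinks G S :
  is_DAG G -> #|clique_sinks G S| = (clique_sinks G S != set0).
Proof.
move=> dagG; rewrite -card_gt0.
suff : (#|clique_sinks G S| <= 1)%N by case: #|_| => [|[]].
apply/card_le1_eqP => x y; rewrite !inE => /andP[xS Sx] /andP[yS Sy].
have [//|xy] := eqVneq x y.
have yGx : y \in G x by apply/(subsetP Sx); rewrite !inE yS andbT eq_sym.
have xGy : x \in G y by apply/(subsetP Sy); rewrite !inE xS andbT.
by have := dagG _ _ yGx; rewrite (connect1 (xGy : edge G x y)).
Qed.

Lemma DAG_sink G S a : is_DAG G -> a \in S ->
  exists2 s, s \in S & {in S, forall z, s \notin G z}.
Proof.
move=> dagG aS; pose ancestors w := #|[set y | connect (edge G) y w]|.
have [s sS smax] := arg_maxnP ancestors aS; exists s => // z zS.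
apply/negP => sGz; have := smax z zS; apply/negP; rewrite -ltnNge.
apply/proper_card/properP; split.
  by apply/subsetP => y; rewrite !inE => /connect_trans; apply; apply: connect1.
by exists z; rewrite inE ?connect0 //; apply: dagG.
Qed.

Lemma markov_equiv_sym G H : markov_equiv G H -> markov_equiv H G.
Proof. by case=> adjGH immGH; split=> *; rewrite ?adjGH ?immGH. Qed.

(* A sink [s] of [H] in [S] is adjacent in [G], hence in [H], to every other
   [z] in [S]: otherwise [z -> x <- s] would be an immorality of [G], hence of
   [H], for the element [x] of [clique_sinks G S]. *)
Lemma markov_equiv_clique_sinks G H S : is_DAG H -> markov_equiv G H ->
  clique_sinks G S != set0 -> clique_sinks H S != set0.
Proof.
move=> dagH [adjGH immGH] /set0Pn[x]; rewrite inE => /andP[xS Sx].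
have [s sS ssink] := DAG_sink dagH xS; apply/set0Pn; exists s.
rewrite inE sS; apply/subsetP => z; rewrite !inE => /andP[zs zS].
suff : adjacent H z s by rewrite /adjacent (negbTE (ssink z zS)) orbF.
have Sx_mem w : w \in S -> w != x -> w \in G x.
  by move=> wS wx; apply/(subsetP Sx); rewrite !inE wx.
rewrite -adjGH; case: (eqVneq z x) zs => [-> xs|zx zs].
  by rewrite /adjacent Sx_mem ?orbT // eq_sym.
have [->|sx] := eqVneq s x; first by rewrite /adjacent Sx_mem.
apply: contraT => zs_nonadj.
have : immorality G z s x by rewrite /immorality !Sx_mem ?zs.
by rewrite immGH => /and4P[_ sHx _ _]; rewrite (negbTE (ssink x xS)) in sHx.
Qed.

Lemma card_clique_sinks_markov G H S : is_DAG G -> is_DAG H -> markov_equiv G H ->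
  #|clique_sinks G S| = #|clique_sinks H S|.
Proof.
move=> dagG dagH GH; rewrite !card_clique_sinks //; congr nat_of_bool.
by apply/idP/idP; apply: markov_equiv_clique_sinks => //; apply: markov_equiv_sym.
Qed.

End CliqueSinks.

Section Moebius.
Variables (T : finType) (R : realFieldType).
Implicit Types (m : {set T} -> R) (P Q S : {set T}).

(* Both sides expand [\prod_i (inS i + outS i)], whose factor vanishes at any
   [i] where membership in [Q] and in [S] differ. *)
Lemma sum_sign_interval Q S :
  \sum_(P : {set T} | (Q \subset P) && (P \subset S)) (-1) ^+ #|P :\: Q|
  = (Q == S)%:R :> R.
Proof.
pose inS i : R := if i \in S then (if i \in Q then 1 else -1) else 0.
pose outS i : R := if i \in Q then 0 else 1.
have sign_prod P : \prod_i (if i \in P then inS i else outS i) =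
    if (Q \subset P) && (P \subset S) then (-1) ^+ #|P :\: Q| else 0.
  case: ifP => [/andP[QP PS] | /negbT]; last first.
    rewrite negb_and => /orP[/subsetPn[i iQ iP]|/subsetPn[i iP iS]].
      by rewrite (bigD1 i) //= (negbTE iP) /outS iQ mul0r.
    by rewrite (bigD1 i) //= iP /inS (negbTE iS) mul0r.
  rewrite -prodr_const [RHS]big_mkcond /=.
  apply: eq_bigr => i _; rewrite /inS /outS !inE.
  move: (subsetP QP i) (subsetP PS i).
  by case: (i \in P) (i \in Q) (i \in S) => [] [] [] h1 h2 //=;
    first [by move: (h1 isT) | by move: (h2 isT)].
rewrite big_mkcond /=; under eq_bigr => P _ do rewrite -sign_prod.
rewrite -bigA_distr; have [QS|QS] := eqVneq Q S.
  rewrite big1 // => i _; rewrite /inS /outS QS /=.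
  by case: (i \in S); rewrite ?addr0 ?add0r.
have [i iQS|QeqS] := pickP (fun i => (i \in Q) != (i \in S)); last first.
  by case/eqP: QS; apply/setP => i; apply/eqP/negbFE/QeqS.
rewrite (bigD1 i) //= /inS /outS.
by move: iQS; case: (i \in Q) (i \in S) => [] [] //= _; rewrite ?addNr ?addr0 mul0r.
Qed.

Definition moebius m S : R :=
  \sum_(Q : {set T} | Q \subset S) (-1) ^+ #|S :\: Q| * m Q.

Lemma moebius_inversion m S0 :
  m S0 = \sum_(S : {set T}) moebius m S * (S \subset S0)%:R.
Proof.
have inner_sum Q : \sum_(P : {set T}) (if Q \subset P then
    (-1) ^+ #|P :\: Q| * m Q * (P \subset S0)%:R else 0) = m Q * (Q == S0)%:R.
  rewrite -sum_sign_interval mulr_sumr [RHS]big_mkcond; apply: eq_bigr => P _.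
  case: (Q \subset P); case: (P \subset S0) => //=.
  - by rewrite mulr1n mulr1 mulrC.
  - by rewrite mulr0n mulr0.
rewrite /moebius; under eq_bigr => S _ do rewrite big_distrl /= big_mkcond /=.
rewrite exchange_big /=; under eq_bigr => Q _ do rewrite inner_sum.
by rewrite (bigD1 S0) //= eqxx mulr1 big1 ?addr0 // => Q /negbTE->; rewrite mulr0.
Qed.

Lemma indicator_subsetU1B x P S : x \notin P ->
  (S \subset x |: P)%:R - (S \subset P)%:R = ((x \in S) && (S :\ x \subset P))%:R :> R.
Proof.
move=> xP; rewrite -subDset.
have -> : (S \subset P) = (x \notin S) && (S :\ x \subset P).
  have [xS|xS] /= := boolP (x \in S).
    by apply: contraNF xP => /subsetP; apply.
  by rewrite (setDidPl _) // disjoint_sym disjoints1.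
by case: (x \in S); case: (S :\ x \subset P); rewrite /= ?subrr ?subr0.
Qed.

Lemma sum_increments_moebius m (G : digraph T) : (forall x, x \notin G x) ->
  \sum_x (m (x |: G x) - m (G x)) = \sum_S moebius m S * #|clique_sinks G S|%:R.
Proof.
move=> irrG; under eq_bigr => x _ do
  rewrite (moebius_inversion m (x |: G x)) (moebius_inversion m (G x)) -sumrB.
under eq_bigr => x _ do
  under eq_bigr => S _ do rewrite -mulrBr indicator_subsetU1B //.
rewrite exchange_big /=; apply: eq_bigr => S _; rewrite -mulr_sumr /=; congr (_ * _).
rewrite -sum1_card natr_sum [RHS]big_mkcond /=; apply: eq_bigr => x _.
by rewrite inE; case: (_ && _).
Qed.

End Moebius.

Lemma cond_b_SE (T : finType) (R : realFieldType) (o : objective T R) :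
  cond_b o -> SE_objective o.
Proof.
case=> m [_ incr_m] G H dagG dagH GH.
have score_moebius G' : is_DAG G' ->
    inner o (eta R G') = \sum_S moebius m S * #|clique_sinks G' S|%:R.
  move=> dagG'; have irrG' x := DAG_irrefl x dagG'.
  rewrite inner_etaE // -sum_increments_moebius //.
  by apply: eq_bigr => x _; rewrite incr_m.
rewrite !score_moebius //; apply: eq_bigr => S _.
by rewrite (card_clique_sinks_markov S dagG dagH GH).
Qed.

Section Dimension.
Variables (T : finType) (R : realFieldType).
Implicit Types (S : {set T}) (o : objective T R).

Definition large_set := {S : {set T} | (1 < #|S|)%N}.

Definition extend0 (mu : {ffun large_set -> R^o}) S : R :=
  if insub S is Some s then mu s else 0.

Definition increments (mu : {ffun large_set -> R^o}) : objective T R :=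
  [ffun u => extend0 mu ((val u).1 |: (val u).2) - extend0 mu (val u).2].

Lemma increments_is_linear : linear increments.
Proof.
move=> k mu nu; apply/ffunP => u; rewrite !ffunE /extend0.
by case: insubP => [s _ _|_]; case: insubP => [s' _ _|_]; rewrite ?ffunE /=; ring.
Qed.

Lemma extend0_small mu S : (#|S| <= 1)%N -> extend0 mu S = 0.
Proof. by move=> S_le1; rewrite /extend0 insubF // ltnNge S_le1. Qed.

Lemma extend0_val mu (s : large_set) : extend0 mu (val s) = mu s.
Proof. by rewrite /extend0 valK. Qed.

Lemma card_large_set : #|{: large_set}| = (2 ^ #|T| - #|T| - 1)%N.
Proof.
have small : [set S : {set T} | #|S| <= 1]%N = set0 |: [set [set x] | x : T].
  apply/setP => S; rewrite !inE leq_eqVlt ltnS leqn0 cards_eq0 orbC.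
  by congr (_ || _); apply/cards1P/imsetP => [[x ->]|[x _ ->]]; exists x.
have set0_notin : set0 \notin [set [set x] | x : T].
  by apply/imsetP => -[x _ /setP/(_ x)]; rewrite !inE eqxx.
rewrite card_sig (@eq_card _ _ (~: [set S : {set T} | #|S| <= 1]%N)); last first.
  by move=> S; rewrite !inE ltnNge.
have := cardsC [set S : {set T} | #|S| <= 1]%N.
rewrite small cardsU1 set0_notin card_imset; last exact: set1_inj.
by rewrite -cardsT -powersetT card_powerset cardsT => <- /=; lia.
Qed.

Lemma cond_b_increments o : cond_b o <-> exists mu, o = increments mu.
Proof.
split=> [[m [m_small incr_m]]|[mu ->]].
  have extend0_m S : extend0 [ffun s => m (val s)] S = m S.
    rewrite /extend0; case: insubP => [s _ <-|]; first by rewrite ffunE.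
    by rewrite -leqNgt => /m_small.
  exists [ffun s => m (val s)]; apply/ffunP => u; have /andP[aB B0] := valP u.
  by rewrite ffunE !extend0_m -incr_m // /oext -surjective_pairing valK.
exists (extend0 mu); split=> [S|a B aB]; first exact: extend0_small.
rewrite /oext; case: insubP => [u _ uE|]; first by rewrite ffunE uE.
rewrite /= aB negbK => /eqP->; rewrite setU0.
by rewrite !extend0_small ?cards1 ?cards0 ?subrr.
Qed.

Lemma increments_inj : injective increments.
Proof.
move=> mu nu incr_eq; apply/ffunP => s; rewrite -!extend0_val.
have [k] := ubnP #|val s|; elim: k (val s) => // k IH S; rewrite ltnS => Sk.
have [S_le1|S_gt1] := leqP #|S| 1; first by rewrite !extend0_small.
have [a aS] : exists a, a \in S by apply/set0Pn; rewrite -card_gt0 ltnW.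
have cardSa : #|S :\ a| = #|S|.-1 by rewrite (cardsD1 a S) aS.
have aSa : (a \notin S :\ a) && (S :\ a != set0).
  by rewrite setD11 -card_gt0 cardSa -ltnS prednK // ltnW.
have := congr1 (fun o : objective T R => o (exist _ (a, S :\ a) aSa)) incr_eq.
rewrite !ffunE /= setD1K // (IH (S :\ a)); first exact: addIr.
by rewrite cardSa -ltnS prednK ?(leq_trans S_gt1) // ltnW.
Qed.

End Dimension.

HB.instance Definition _ (T : finType) (R : realFieldType) :=
  GRing.isLinear.Build R _ _ _ (@increments T R) (@increments_is_linear T R).

Theorem lemma5 (T : finType) (R : realFieldType) (hn : (2 <= #|T|)%N) :
  (forall o : objective T R,
     (SE_objective o <-> cond_a o) /\ (cond_a o <-> cond_b o)) /\
  (exists U : {vspace objective T R},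
     (forall o : objective T R, o \in U <-> SE_objective o) /\
     \dim U = (2 ^ #|T| - #|T| - 1)%N).
Proof.
have SE_cond_b (o : objective T R) : SE_objective o <-> cond_b o.
  by split=> [SEo|]; [exact: cond_a_b (SE_cond_a SEo) | exact: cond_b_SE].
split=> [o|].
  have a_iff_b : cond_a o <-> cond_b o by split; [exact: cond_a_b | exact: cond_b_a].
  by rewrite SE_cond_b a_iff_b.
exists (limg (linfun (@increments T R))); split=> [o|].
  rewrite SE_cond_b cond_b_increments.
  split=> [/memv_imgP[mu _ ->]|[mu ->]]; first by exists mu; rewrite lfunE.
  by apply/memv_imgP; exists mu; rewrite ?memvf ?lfunE.
have /lker0P/eqP ker0 : injective (linfun (@increments T R)).
  by move=> mu nu; rewrite !lfunE; apply: increments_inj.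
by rewrite limg_dim_eq ?ker0 ?capv0 // dimvf /dim /= muln1 card_large_set.
Qed.
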